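(* Let $\alpha,\beta$ be positive integers, let $a>0$ and $b$ be real numbers, and for each non-negative integer $n$ let $$S_n=\{n\alpha+j\beta : j\in\mathbb{Z}_{\geq0},\ j>an+b\}\subset\mathbb{Z}.$$ Let $g'=\gcd(\alpha,\beta)$ and $B_0=\beta^2(\alpha+a(1+\beta))+\beta$. Then for every $B\geq B_0$, every non-negative integer $n$, and every multiple $M$ of $g'$ with $M\geq\min(S_n)+B$, there is an integer $i$ with $n\leq i<n+\beta(\beta+1)$ such that $M\in S_i$. *)

From Stdlib Require Import Reals ZArith Lia Lra.
Open Scope R_scope.

Definition in_S (alpha beta : Z) (a b : R) (n : nat) (m : Z) : Prop :=
  exists j : Z, (0 <= j)%Z /\ IZR j > a * INR n + b /\
                m = (Z.of_nat n * alpha + j * beta)%Z.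

Definition is_min_S (alpha beta : Z) (a b : R) (n : nat) (m : Z) : Prop :=
  in_S alpha beta a b n m /\ forall x, in_S alpha beta a b n x -> (m <= x)%Z.

From Stdlib Require Import Reals ZArith.
From Stdlib Require Import Znumtheory Lia Lra Psatz.
Open Scope R_scope.

(* By Bezout, every multiple of gcd(alpha, beta) can be written as
   (n + k) alpha + j beta with 0 <= k < beta: reduce the alpha-coefficient
   modulo beta.  Comparing with the minimum n alpha + jn beta of S_n, the
   slack B forces j beta >= jn beta + B - k alpha, and B0 is large enough
   that this gives j > jn + a beta > a (n + k) + b.  Hence M lies in S_(n+k),
   with n <= n + k < n + beta <= n + beta (beta + 1). *)

Lemma bezout_decomposition (alpha beta M x : Z) :
  (0 < beta)%Z -> (Z.gcd alpha beta | M)%Z ->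
  exists k j : Z, (0 <= k < beta)%Z /\ M = ((x + k) * alpha + j * beta)%Z.
Proof.
  intros Hbeta [t ->].
  destruct (Zis_gcd_bezout _ _ _ (Zgcd_is_gcd alpha beta)) as [u v Huv].
  set (q := ((t * u - x) / beta)%Z).
  set (k := ((t * u - x) mod beta)%Z).
  assert (Hdm : (t * u - x = beta * q + k)%Z) by (apply Z.div_mod; lia).
  exists k, (q * alpha + t * v)%Z; split.
  - apply Z.mod_pos_bound; lia.
  - rewrite <- Huv.
    replace k with (t * u - x - beta * q)%Z by lia.
    ring.
Qed.

Lemma coefficient_gap (a al be B jn j k : R) :
  0 < a -> 0 <= al -> 1 <= be -> 0 <= k <= be - 1 ->
  B >= be ^ 2 * (al + a * (1 + be)) + be ->
  j * be + k * al >= jn * be + B ->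
  jn + a * be < j.
Proof.
  intros Ha Hal Hbe [Hk0 Hk1] HB Hj.
  assert (Hkal : k * al <= (be - 1) * al) by nra.
  assert (Hbbal : be * al <= be * be * al) by nra.
  assert (Habbb : 0 <= a * be * be * be) by (repeat apply Rmult_le_pos; lra).
  apply (Rmult_lt_reg_r be); [lra | nra].
Qed.

Theorem mainTheorem18 (alpha beta : Z) (a b : R)
  (Halpha : (0 < alpha)%Z) (Hbeta : (0 < beta)%Z) (Ha : 0 < a) :
  let g' := Z.gcd alpha beta in
  let B0 := IZR beta ^ 2 * (IZR alpha + a * (1 + IZR beta)) + IZR beta in
  forall (B : R), B >= B0 ->
  forall (n : nat) (mn : Z), is_min_S alpha beta a b n mn ->
  forall (M : Z), (g' | M)%Z -> IZR M >= IZR mn + B ->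
  exists i : nat, (n <= i < n + Z.to_nat (beta * (beta + 1)))%nat /\
                  in_S alpha beta a b i M.
Proof.
  intros g' B0 B HB n mn [[jn [Hjn0 [Hjn ->]]] _] M HgM HM.
  destruct (bezout_decomposition alpha beta M (Z.of_nat n) Hbeta HgM)
    as [k [j [Hk ->]]].
  assert (Hgap : IZR jn + a * IZR beta < IZR j).
  { apply (coefficient_gap a (IZR alpha) (IZR beta) B (IZR jn) (IZR j) (IZR k)).
    - exact Ha.
    - apply IZR_le; lia.
    - apply IZR_le; lia.
    - split; [apply IZR_le | rewrite <- minus_IZR; apply IZR_le].
      all: lia.
    - exact HB.
    - rewrite !plus_IZR, !mult_IZR, plus_IZR in HM; lra. }
  assert (Hak : a * IZR k < a * IZR beta)
    by (apply Rmult_lt_compat_l; [exact Ha | apply IZR_lt; lia]).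
  assert (Hak0 : 0 <= a * IZR k)
    by (apply Rmult_le_pos; [lra | apply IZR_le; lia]).
  assert (Hjn0R : 0 <= IZR jn) by (apply IZR_le; lia).
  exists (Z.to_nat (Z.of_nat n + k)); split; [nia |].
  exists j; split; [| split].
  - apply le_IZR; lra.
  - rewrite INR_IZR_INZ, Z2Nat.id, plus_IZR, <- INR_IZR_INZ by lia.
    lra.
  - rewrite Z2Nat.id by lia; reflexivity.
Qed.
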